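(* Let $m\ge 1$ be an integer and $S>1$. For $j=1,\ldots,2m$ put $\theta_j=\pi(j-1/2)/m$, \[ z_j=\frac{S e^{i\theta_j}+S^{-1}e^{-i\theta_j}}{S+S^{-1}},\qquad w_j=\frac{1}{2m}\,\frac{S e^{i\theta_j}-S^{-1}e^{-i\theta_j}}{S+S^{-1}}, \] and define the rational function $r_m^{(T)}(z)=\sum_{j=1}^{2m}\frac{w_j}{z_j-z}$. Let \[ \alpha=\frac{S^{2m}+S^{-2m}}{S^{2m}-S^{-2m}},\qquad \beta=\frac{2}{S^{2m}-S^{-2m}}. \] Then \[ r_m^{(T)}(z)=\frac{1}{\alpha+\beta\,T_{2m}\!\left(\frac{S+S^{-1}}{2}z\right)}=\frac{1}{(\alpha-\beta)+2\beta\,T_m\!\left(\frac{S+S^{-1}}{2}z\right)^2}, \] where $T_j(z)=\cos(j\arccos z)$ is the Chebyshev polynomial of the first kind of degree $j$. Consequently $r_m^{(T)}$ is a rational function of exact type $(0,2m)$ (numerator degree $0$, denominator degree $2m$), and on the interval $[-2/(S+S^{-1}),\,2/(S+S^{-1})]$ it equioscillates $2m+1$ times, alternating between the values $(\alpha+\beta)^{-1}$ and $(\alpha-\beta)^{-1}$.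
   Context: The function $r_m^{(T)}$ arises as the trapezoid-rule approximation, with $2m$ equispaced nodes in $\theta\in[0,2\pi)$, of the contour integral $\frac{1}{2\pi i}\int_{\Gamma_S}\frac{d\gamma}{\gamma-z}$ over the ellipse $\Gamma_S=\{\gamma(\theta)=\frac{Se^{i\theta}+S^{-1}e^{-i\theta}}{S+S^{-1}}:\theta\in[0,2\pi)\}$. A rational function is of type $(\mu,\nu)$ if it is a quotient of a polynomial of degree at most $\mu$ by a polynomial of degree at most $\nu$. *)

From mathcomp Require Import all_boot all_algebra.
From mathcomp Require Import reals trigo.
From mathcomp Require Export complex.
Set Implicit Arguments. Unset Strict Implicit. Unset Printing Implicit Defensive.
Import GRing.Theory Num.Theory.
Local Open Scope ring_scope.
Local Open Scope complex_scope.

(* Chebyshev polynomials of the first kind, T_0 = 1, T_1 = X,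
   T_(n+2) = 2 X T_(n+1) - T_n  (so T_n(cos t) = cos (n t)). *)
Fixpoint cheb (F : nzRingType) (n : nat) : {poly F} :=
  match n with
  | 0 => 1
  | 1 => 'X
  | S ((S n') as n1) => 2%:R *: 'X * cheb F n1 - cheb F n'
  end.

Section Defs.
Variable R : realType.

Definition expi (t : R) : R[i] := (cos t) +i* (sin t).

(* theta_{j+1} = pi ((j+1) - 1/2) / m = pi (2j+1)/(2m), j = 0, ..., 2m-1 *)
Definition theta (m j : nat) : R := pi * (2 * j + 1)%:R / (2 * m)%:R.

Definition znode (m : nat) (S : R) (j : nat) : R[i] :=
  (S%:C * expi (theta m j) + S^-1%:C * expi (- theta m j)) / (S + S^-1)%:C.

Definition wnode (m : nat) (S : R) (j : nat) : R[i] :=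
  ((2 * m)%:R^-1)%:C *
  ((S%:C * expi (theta m j) - S^-1%:C * expi (- theta m j)) / (S + S^-1)%:C).

Definition rT (m : nat) (S : R) (z : R[i]) : R[i] :=
  \sum_(j < 2 * m) wnode m S j / (znode m S j - z).

Definition alphaT (m : nat) (S : R) : R :=
  (S ^+ (2 * m) + S ^- (2 * m)) / (S ^+ (2 * m) - S ^- (2 * m)).

Definition betaT (m : nat) (S : R) : R :=
  2 / (S ^+ (2 * m) - S ^- (2 * m)).

Definition not_node (m : nat) (S : R) (z : R[i]) : Prop :=
  forall j : nat, (j < 2 * m)%N -> z <> znode m S j.

End Defs.

Definition exact_type (F : fieldType) (mu nu : nat) (f : F -> F) (D : F -> Prop) : Prop :=
  exists p q : {poly F},
    [/\ size p = mu.+1, size q = nu.+1, coprimep p q &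
        forall z, D z -> q.[z] != 0 /\ f z = p.[z] / q.[z]].

From mathcomp Require Import all_boot all_order all_algebra.
From mathcomp Require Import reals trigo complex.
From mathcomp Require Import ring lra zify.
Set Implicit Arguments. Unset Strict Implicit. Unset Printing Implicit Defensive.
Import Order.TTheory GRing.Theory Num.Theory.
Local Open Scope ring_scope.
Local Open Scope complex_scope.

(* Write J(v) = (v + v^-1)/2 (the Joukowski map), c = (S + S^-1)/2 and v_j = S e^(i theta_j).
   Then c z_j = J(v_j) and v_j^(2m) = -S^(2m), so T_n(J(v)) = J(v^n) makes every z_j a root
   of the degree-2m polynomial Q(z) = alpha + beta T_2m(c z); the z_j are distinct because
   J(u) = J(v) forces u = v or u v = 1, while |v_i v_k| = S^2. Differentiating
   T_n(J(v)) = J(v^n) gives w_j = -1/Q'(z_j), so r is the partial-fraction expansion of 1/Q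
   (Lagrange interpolation of the constant 1 at the roots of Q). On the interval c z = cos t,
   hence Q = alpha + beta cos(2 m t) stays in [alpha - beta, alpha + beta] and reaches the two
   ends alternately at t = pi k/(2m). *)

Section PartialFractions.
Variable F : fieldType.
Implicit Types (Q : {poly F}) (x y : F).

Lemma divpXsubCK Q x : root Q x -> Q %/ ('X - x%:P) * ('X - x%:P) = Q.
Proof. by move=> Qx; rewrite divpK // dvdp_XsubCl. Qed.

Lemma horner_divpXsubC Q x y : root Q x -> y != x ->
  (Q %/ ('X - x%:P)).[y] = Q.[y] / (y - x).
Proof.
move=> Qx yx; rewrite -{2}(divpXsubCK Qx) hornerM hornerXsubC mulfK //.
by rewrite subr_eq0.
Qed.

Lemma horner_divpXsubC_root Q x : root Q x -> (Q %/ ('X - x%:P)).[x] = Q^`().[x].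
Proof.
move=> Qx; rewrite -{2}(divpXsubCK Qx) derivM derivXsubC hornerD !hornerM.
by rewrite hornerXsubC subrr mulr0 add0r hornerC mulr1.
Qed.

Lemma horner_mul_sum_partial_fractions (I : finType) Q (r : I -> F) :
  injective r -> (0 < #|I|)%N -> size Q = #|I|.+1 ->
  (forall i, root Q (r i)) -> (forall i, Q^`().[r i] != 0) ->
  forall z, (forall i, z != r i) ->
  Q.[z] * \sum_i (Q^`().[r i] * (z - r i))^-1 = 1.
Proof.
move=> r_inj I_gt0 sizeQ Qr dQr z zr.
pose G := \sum_i (Q^`().[r i])^-1 *: (Q %/ ('X - (r i)%:P)).
have G_r i : G.[r i] = 1.
  rewrite horner_sum (bigD1 i) //= hornerZ horner_divpXsubC_root // mulVf //.
  rewrite big1 ?addr0 // => k ki; rewrite hornerZ horner_divpXsubC //.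
    by rewrite (eqP (Qr i)) mul0r mulr0.
  by apply: contra ki => /eqP /r_inj ->.
have sizeG : (size G <= #|I|)%N.
  rewrite /G; apply: (big_ind (fun p : {poly F} => size p <= #|I|)%N).
  - by rewrite size_poly0.
  - by move=> p q hp hq; rewrite (leq_trans (size_polyD _ _)) // geq_max hp hq.
  move=> i _; rewrite (leq_trans (size_scale_leq _ _)) //.
  by rewrite size_divp ?polyXsubC_eq0 // size_XsubC sizeQ subn1.
have G1 : G = 1.
  apply/eqP; rewrite -subr_eq0; apply/eqP.
  apply: (@roots_geq_poly_eq0 _ _ [seq r i | i <- enum I]).
  - by apply/allP => _ /mapP [i _ ->]; rewrite rootE hornerD hornerN hornerC G_r subrr.
  - by rewrite map_inj_uniq ?enum_uniq.
  rewrite size_map -cardE (leq_trans (size_polyD _ _)) // size_polyN size_poly1.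
  by rewrite geq_max sizeG.
have /(congr1 (horner^~ z)) := G1; rewrite horner_sum hornerC => <-.
rewrite mulr_sumr; apply: eq_bigr => i _.
rewrite hornerZ horner_divpXsubC ?zr //.
by rewrite invfM mulrCA mulrA.
Qed.

End PartialFractions.

Definition joukowski (F : numFieldType) (v : F) : F := (v + v^-1) / 2%:R.

Lemma chebSS (F : nzRingType) n : cheb F n.+2 = 2%:R *: 'X * cheb F n.+1 - cheb F n.
Proof. by []. Qed.

Section Chebyshev.
Variable F : numFieldType.
Implicit Types (v : F) (n : nat).

Lemma size_cheb n : size (cheb F n) = n.+1.
Proof.
elim/ltn_ind: n => -[|[|n]] IH; first by rewrite size_polyC oner_eq0.
  by rewrite size_polyX.
have cheb1_neq0 : cheb F n.+1 != 0 by rewrite -size_poly_eq0 IH.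
rewrite chebSS -scalerAl mulrC size_polyDl size_scale ?pnatr_eq0 //.
  by rewrite size_mulX // IH.
by rewrite size_polyN size_mulX // !IH.
Qed.

Lemma cheb_joukowski v n : v != 0 -> (cheb F n).[joukowski v] = joukowski (v ^+ n).
Proof.
move=> v0; elim/ltn_ind: n => -[|[|n]] IH; first by rewrite /= hornerC /joukowski invr1; field.
  by rewrite /= hornerX.
rewrite chebSS hornerD hornerN hornerM hornerZ hornerX !IH // /joukowski !exprS.
have vn0 : v ^+ n != 0 by rewrite expf_neq0.
by field; rewrite vn0 v0.
Qed.

Lemma mulrr_sub1_neq0 v : v != 0 -> v - v^-1 != 0 -> v * v - 1 != 0.
Proof.
move=> v0; apply: contra => /eqP h.
have -> : v - v^-1 = (v * v - 1) / v by field.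
by rewrite h mul0r.
Qed.

Lemma deriv_cheb_joukowski v n : v != 0 -> v - v^-1 != 0 ->
  (cheb F n)^`().[joukowski v] = n%:R * (v ^+ n - (v ^+ n)^-1) / (v - v^-1).
Proof.
move=> v0 dv0; have dv0' := mulrr_sub1_neq0 v0 dv0.
elim/ltn_ind: n => -[|[|n]] IH.
- by rewrite /= derivC hornerC !mul0r.
- by rewrite /= derivX hornerC expr1 mul1r divff.
rewrite chebSS derivB derivM derivZ derivX hornerD hornerN hornerD !hornerM !hornerZ.
rewrite hornerX hornerC !IH // cheb_joukowski // /joukowski !exprS.
have vn0 : v ^+ n != 0 by rewrite expf_neq0.
rewrite -[n.+2]addn2 -[n.+1]addn1 !natrD.
by field; rewrite ?vn0 ?v0 ?dv0 ?dv0'.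
Qed.

End Chebyshev.

Lemma joukowski_surj (C : numClosedFieldType) (y : C) :
  exists2 v : C, v != 0 & y = joukowski v.
Proof.
pose q := sqrtC (y ^+ 2 - 1).
have yqyq : (y + q) * (y - q) = 1.
  by rewrite mulrC -subr_sqr /q sqrtCK opprB addrC subrK.
have yq0 : y + q != 0 by apply: contra_eq_neq yqyq => ->; rewrite mul0r eq_sym oner_neq0.
exists (y + q) => //.
have yqV : (y + q)^-1 = y - q by apply: (mulfI yq0); rewrite mulfV.
by rewrite /joukowski yqV; field.
Qed.

Lemma cheb_double (C : numClosedFieldType) n (y : C) :
  (cheb C (2 * n)).[y] = 2%:R * (cheb C n).[y] ^+ 2 - 1.
Proof.
have [v v0 ->] := joukowski_surj y.
rewrite !cheb_joukowski // /joukowski mulnC exprM.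
have vn0 := expf_neq0 n v0; move: (v ^+ n) vn0 => w w0.
by field; rewrite w0.
Qed.

Section ComplexExponential.
Variable R : realType.
Implicit Types (r t : R) (n : nat).

Lemma real_complex_eq0 r : (r%:C == 0 :> R[i]) = (r == 0).
Proof. by rewrite eq_complex /= eqxx andbT. Qed.

Lemma expiD t1 t2 : expi (t1 + t2) = expi t1 * expi t2.
Proof. by rewrite /expi sinD cosD; apply/eqP; rewrite eq_complex /=; apply/andP; split; apply/eqP; ring. Qed.

Lemma expi0 : expi (0 : R) = 1.
Proof. by rewrite /expi sin0 cos0. Qed.

Lemma expiNr t : expi t * expi (- t) = 1.
Proof. by rewrite -expiD subrr expi0. Qed.

Lemma expi_neq0 t : expi t != 0.
Proof. by apply: contra_eq_neq (expiNr t) => ->; rewrite mul0r eq_sym oner_neq0. Qed.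

Lemma expiN t : expi (- t) = (expi t)^-1.
Proof. by apply: (mulfI (expi_neq0 t)); rewrite expiNr mulfV ?expi_neq0. Qed.

Lemma expiX t n : expi t ^+ n = expi (n%:R * t).
Proof.
elim: n => [|n IH]; first by rewrite mul0r expi0.
by rewrite exprS IH -expiD -natr1 mulrDl mul1r addrC.
Qed.

Lemma expipi : expi pi = -1 :> R[i].
Proof. by rewrite /expi cospi sinpi; apply/eqP; rewrite eq_complex /= oppr0 !eqxx. Qed.

Lemma joukowski_expi t : joukowski (expi t) = (cos t)%:C.
Proof.
rewrite /joukowski -expiN /expi cosN sinN; apply/eqP.
by rewrite eq_complex /=; apply/andP; split; apply/eqP; field.
Qed.

Lemma cheb_cos t n : (cheb R[i] n).[(cos t)%:C] = (cos (n%:R * t))%:C.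
Proof. by rewrite -!joukowski_expi cheb_joukowski ?expi_neq0 // expiX. Qed.

Lemma cos_natpi n : cos (n%:R * pi) = (-1) ^+ n :> R.
Proof. by rewrite -[_ * pi]add0r mulr_natl (alternatingn (@cosDpi R)) cos0 mulr1. Qed.

Lemma scale_expi_neq1 r t : 1 < r -> r%:C * expi t != 1.
Proof.
move=> r_gt1; have r0 : r != 0 by rewrite gt_eqF // (lt_trans ltr01).
apply/eqP => rt1; have : expi t = (r^-1)%:C.
  have rC0 : r%:C != 0 :> R[i] by rewrite real_complex_eq0.
  by apply: (mulfI rC0); rewrite rt1 fmorphV mulfV.
rewrite /expi => -[cos_t sin_t].
have := cos2Dsin2 t; rewrite cos_t sin_t expr0n addr0 exprVn => /eqP.
by rewrite invr_eq1 sqrf_eq1 => /orP[] /eqP; lra.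
Qed.

Lemma expi_pi_frac_neq1 (d k : nat) : (0 < d < 2 * k)%N ->
  expi (pi * d%:R / k%:R) != 1 :> R[i].
Proof.
case/andP => d_gt0 d_lt; have k_gt0 : (0 < k)%N by case: k d_lt; rewrite ?muln0.
have k0 : (k%:R : R) != 0 by rewrite pnatr_eq0 -lt0n.
have sin_gt0 e : (0 < e < k)%N -> 0 < sin (pi * e%:R / k%:R : R).
  case/andP => e_gt0 e_lt; apply: sin_gt0_pi; rewrite divr_gt0 ?mulr_gt0 ?pi_gt0 ?ltr0n //=.
  by rewrite ltr_pdivrMr ?ltr0n // ltr_pM2l ?pi_gt0 // ltr_nat.
have sin_neq0 (x : R) : sin x != 0 -> expi x != 1.
  by apply: contra; rewrite /expi => /eqP [_ ->].
case: (ltngtP d k) => [d_ltk | d_gtk | ->].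
- by apply/sin_neq0/lt0r_neq0/sin_gt0; rewrite d_gt0.
- have -> : pi * d%:R / k%:R = pi * (d - k)%:R / k%:R + pi :> R.
    by rewrite natrB 1?ltnW //; field.
  apply/sin_neq0; rewrite sinD cospi sinpi mulr0 addr0 mulrN1 oppr_eq0.
  by apply/lt0r_neq0/sin_gt0; lia.
- by rewrite mulfK // expipi eq_complex /= negb_and; apply/orP; left; apply/eqP; lra.
Qed.
End ComplexExponential.

Lemma joukowski_inj (F : numFieldType) (u v : F) : u != 0 -> v != 0 -> u * v != 1 ->
  joukowski u = joukowski v -> u = v.
Proof.
move=> u0 v0 uv1 /(congr1 (fun x => x * 2%:R)); rewrite /joukowski !divfK ?pnatr_eq0 //.
move=> e; have : (u - v) * (1 - (u * v)^-1) = 0.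
  have -> : (u - v) * (1 - (u * v)^-1) = (u + u^-1) - (v + v^-1).
    by field; rewrite u0 v0.
  by rewrite e subrr.
move/eqP; rewrite mulf_eq0 !subr_eq0 [1 == _]eq_sym invr_eq1 (negPf uv1) orbF.
by move/eqP.
Qed.

Section Nodes.
Variables (R : realType) (m : nat) (S : R).
Hypotheses (m_gt0 : (0 < m)%N) (S_gt1 : 1 < S).

Let a := alphaT m S.
Let b := betaT m S.
Let c := (S + S^-1) / 2.
Let s := S ^+ (2 * m).
Let vnode (j : nat) : R[i] := S%:C * expi (theta R m j).

Lemma S_gt0 : 0 < S. Proof. exact: lt_trans ltr01 S_gt1. Qed.

Lemma c_gt0 : 0 < c. Proof. by rewrite divr_gt0 // addr_gt0 ?invr_gt0 ?S_gt0. Qed.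

Lemma s_gt1 : 1 < s. Proof. by rewrite expr_gt1 ?muln_gt0 // ltW ?S_gt0. Qed.

Lemma S_complex_neq0 : S%:C != 0 :> R[i].
Proof. by rewrite real_complex_eq0 gt_eqF ?S_gt0. Qed.

Lemma vnode_neq0 j : vnode j != 0.
Proof. by rewrite mulf_neq0 ?expi_neq0 ?S_complex_neq0. Qed.

Lemma vnodeV j : (vnode j)^-1 = S^-1%:C * expi (- theta R m j).
Proof. by rewrite expiN invfM fmorphV. Qed.

Lemma c_complexE : c%:C = (S + S^-1)%:C / 2%:R.
Proof. by rewrite rmorphM fmorphV rmorph_nat. Qed.

Lemma SSV_complex_neq0 : (S + S^-1)%:C != 0 :> R[i].
Proof. by rewrite real_complex_eq0 gt_eqF // addr_gt0 ?invr_gt0 ?S_gt0. Qed.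

Lemma c_znode j : c%:C * znode m S j = joukowski (vnode j).
Proof.
rewrite /znode /joukowski vnodeV /vnode c_complexE.
by move: (S + S^-1)%:C SSV_complex_neq0 => K K0; field; rewrite S_complex_neq0 K0.
Qed.

Lemma wnodeE j :
  wnode m S j = (vnode j - (vnode j)^-1) / ((2 * m)%:R * (S + S^-1)%:C).
Proof.
rewrite /wnode vnodeV /vnode fmorphV rmorph_nat.
move: (S + S^-1)%:C SSV_complex_neq0 => K K0.
by field; rewrite K0 S_complex_neq0 pnatr_eq0 -lt0n m_gt0.
Qed.

Lemma vnode_expn j : vnode j ^+ (2 * m) = - s%:C.
Proof.
have m0 : (m%:R : R) != 0 by rewrite pnatr_eq0 -lt0n.
rewrite /vnode exprMn rmorphXn expiX /theta.
have -> : ((2 * m)%:R * (pi * (2 * j + 1)%:R / (2 * m)%:R) : R) = (2 * j + 1)%:R * pi.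
  by rewrite natrM; field; rewrite m0.
by rewrite -expiX expipi -signr_odd oddD oddM /= mulrN1.
Qed.

Lemma vnode_mul_neq1 i j : vnode i * vnode j != 1.
Proof.
rewrite /vnode mulrACA -rmorphM -expiD; apply: scale_expi_neq1.
by rewrite -expr2 expr_gt1 // ltW ?S_gt0.
Qed.

Lemma vnode_subV_neq0 j : vnode j - (vnode j)^-1 != 0.
Proof.
rewrite subr_eq0; apply: contra (vnode_mul_neq1 j j) => /eqP e.
by rewrite {2}e mulfV ?vnode_neq0.
Qed.

Lemma theta_sub i k : (i <= k)%N -> theta R m k - theta R m i = pi * (k - i)%:R / m%:R.
Proof.
move=> ik; have m0 : (m%:R : R) != 0 by rewrite pnatr_eq0 -lt0n.
rewrite /theta natrB // !natrD; field.
by rewrite m0 -natrD pnatr_eq0 addn_eq0 andbb -lt0n m_gt0.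
Qed.

Lemma znode_inj : injective (fun j : 'I_(2 * m) => znode m S j).
Proof.
move=> i k /(congr1 (fun z => c%:C * z)) /=; rewrite !c_znode.
move/(joukowski_inj (vnode_neq0 i) (vnode_neq0 k) (vnode_mul_neq1 i k)).
move/(mulfI S_complex_neq0) => e; apply/val_inj => /=.
wlog ik : i k e / (i <= k)%N => [hw|].
  by case: (leqP i k) => [|/ltnW] /hw ->.
apply/eqP; rewrite eqn_leq ik leqNgt /=; apply/negP => ik_lt.
have : expi (theta R m k - theta R m i) == 1.
  by rewrite expiD expiN e mulfV ?expi_neq0.
rewrite theta_sub 1?ltnW //; apply/negP/expi_pi_frac_neq1.
by have := ltn_ord k; lia.
Qed.

Lemma s_gt0 : 0 < s. Proof. exact: lt_trans ltr01 s_gt1. Qed.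

Lemma s_sqr_sub1_neq0 : s * s - 1 != 0.
Proof.
have s2 : 1 < s ^+ 2 by rewrite expr_gt1 ?s_gt1 // ltW // s_gt0.
by rewrite subr_eq0 gt_eqF // -expr2.
Qed.

Lemma s_sub_inv_gt0 : 0 < s - s^-1.
Proof.
by rewrite subr_gt0 (lt_trans _ s_gt1) // invf_lt1 ?s_gt1 ?s_gt0.
Qed.

Lemma beta_gt0 : 0 < b.
Proof. by rewrite divr_gt0 ?s_sub_inv_gt0. Qed.

Lemma alpha_sub_beta_gt0 : 0 < a - b.
Proof.
rewrite -mulrBl divr_gt0 ?s_sub_inv_gt0 // -/s.
have -> : s + s^-1 - 2 = (s - 1) ^+ 2 / s by field; rewrite gt_eqF ?s_gt0.
by rewrite divr_gt0 ?s_gt0 // exprn_gt0 // subr_gt0 s_gt1.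
Qed.

Definition denT : {poly R[i]} := b%:C *: (cheb _ (2 * m) \Po (c%:C *: 'X)) + (a%:C)%:P.

Lemma horner_denT z : denT.[z] = a%:C + b%:C * (cheb _ (2 * m)).[c%:C * z].
Proof. by rewrite hornerD hornerZ horner_comp hornerZ hornerX hornerC addrC. Qed.

Lemma deriv_denT z : denT^`().[z] = b%:C * c%:C * (cheb _ (2 * m))^`().[c%:C * z].
Proof.
rewrite derivD derivC addr0 derivZ deriv_comp derivZ derivX hornerZ hornerM.
by rewrite horner_comp !hornerZ hornerX hornerC mulr1 mulrAC mulrA.
Qed.

Lemma size_denT : size denT = (2 * m).+1.
Proof.
have b0 : b%:C != 0 :> R[i] by rewrite real_complex_eq0 gt_eqF ?beta_gt0.
have c0 : c%:C != 0 :> R[i] by rewrite real_complex_eq0 gt_eqF ?c_gt0.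
have cX2 : size (c%:C *: 'X : {poly R[i]}) = 2 by rewrite size_scale // size_polyX.
rewrite size_polyDl size_scale // size_comp_poly2 ?size_cheb //.
by rewrite (leq_ltn_trans (size_polyC_leq1 _)) // ltnS muln_gt0.
Qed.

Lemma root_denT_znode j : root denT (znode m S j).
Proof.
have e : joukowski (- s%:C) = (- ((s + s^-1) / 2)) %:C.
  rewrite /joukowski invrN -fmorphV -opprD -rmorphD rmorphN rmorphM fmorphV rmorph_nat.
  by rewrite mulNr.
rewrite rootE horner_denT c_znode cheb_joukowski ?vnode_neq0 // vnode_expn e.
rewrite -rmorphM -rmorphD real_complex_eq0; apply/eqP.
rewrite /a /b /alphaT /betaT -/s.
by field; rewrite s_sqr_sub1_neq0 gt_eqF ?s_gt0.
Qed.

Lemma wnode_mul_deriv_denT j : wnode m S j * denT^`().[znode m S j] = -1.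
Proof.
have bE : b%:C = 2%:R / (s%:C - (s%:C)^-1) :> R[i].
  by rewrite rmorphM fmorphV rmorphB fmorphV rmorph_nat.
rewrite deriv_denT c_znode deriv_cheb_joukowski ?vnode_neq0 ?vnode_subV_neq0 //.
rewrite vnode_expn wnodeE bE c_complexE.
have := vnode_subV_neq0 j; have := vnode_neq0 j; have := SSV_complex_neq0.
have sC0 : s%:C != 0 :> R[i] by rewrite real_complex_eq0 gt_eqF ?s_gt0.
have sC1 : s%:C * s%:C - 1 != 0 :> R[i].
  by rewrite -rmorphM -(rmorph1 (@real_complex R)) -rmorphB real_complex_eq0 s_sqr_sub1_neq0.
move: (vnode j) (S + S^-1)%:C => v K K0 v0 vV0.
have vv1 := mulrr_sub1_neq0 v0 vV0.
by field; rewrite v0 vv1 sC0 sC1 K0 pnatr_eq0 -lt0n m_gt0.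
Qed.

Lemma denT_mul_rT z : not_node m S z -> denT.[z] * rT m S z = 1.
Proof.
move=> z_nn; have dQ0 j : denT^`().[znode m S j] != 0.
  by apply: contra_eq_neq (wnode_mul_deriv_denT j) => ->; rewrite mulr0 eq_sym oppr_eq0 oner_neq0.
have -> : rT m S z = \sum_(j < 2 * m) (denT^`().[znode m S j] * (z - znode m S j))^-1.
  apply: eq_bigr => j _; have := wnode_mul_deriv_denT j.
  move: (wnode m S j) (denT^`().[_]) (dQ0 j) => w d d0 wd.
  rewrite (_ : w = - d^-1); last by apply: (mulIf d0); rewrite wd mulNr mulVf.
  by rewrite invfM -[z - _]opprB invrN mulrN mulNr.
apply: horner_mul_sum_partial_fractions; rewrite ?card_ord ?muln_gt0 //.
- exact: znode_inj.
- exact: size_denT.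
- by move=> j; apply: root_denT_znode.
- by move=> j; apply/eqP => e; apply: (z_nn j).
Qed.

Lemma not_node_denT z : not_node m S z <-> denT.[z] != 0.
Proof.
split=> [z_nn | Q0 j _ e].
  by apply: contra_eq_neq (denT_mul_rT z_nn) => ->; rewrite mul0r eq_sym oner_neq0.
by move: Q0; rewrite e (eqP (root_denT_znode j)) eqxx.
Qed.

Lemma rT_denT z : denT.[z] != 0 -> rT m S z = denT.[z]^-1.
Proof.
move=> Q0; apply: (mulfI Q0); rewrite mulfV //.
exact/denT_mul_rT/not_node_denT.
Qed.

Lemma two_div_SSV : 2 / (S + S^-1) = c^-1.
Proof. by rewrite invf_div. Qed.

Lemma cos_div_c_bounds t : - (2 / (S + S^-1)) <= cos t / c <= 2 / (S + S^-1).
Proof.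
rewrite two_div_SSV mulrC.
have := cos_geN1 t; have := cos_le1 t; have : 0 < c^-1 by rewrite invr_gt0 c_gt0.
by move: (c^-1) (cos t) => ci x ci0 x1 x2; apply/andP; split; nra.
Qed.

Lemma alpha_beta_cos_bounds u : a - b <= a + b * cos u <= a + b.
Proof.
have := beta_gt0; have := cos_geN1 u; have := cos_le1 u; move: (cos u) => x x1 x2 b0.
by apply/andP; split; nra.
Qed.

Lemma rT_cos t : rT m S (cos t / c)%:C = ((a + b * cos ((2 * m)%:R * t))^-1)%:C.
Proof.
have Q_cos : denT.[(cos t / c)%:C] = (a + b * cos ((2 * m)%:R * t))%:C.
  rewrite horner_denT -rmorphM mulrCA mulfV ?gt_eqF ?c_gt0 // mulr1.
  by rewrite cheb_cos -rmorphM -rmorphD.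
have [lo _] := andP (alpha_beta_cos_bounds ((2 * m)%:R * t)).
have Q_gt0 := lt_le_trans alpha_sub_beta_gt0 lo.
by rewrite rT_denT Q_cos ?fmorphV // real_complex_eq0 gt_eqF.
Qed.

Lemma rT_closed_forms z : not_node m S z ->
  a%:C + b%:C * (cheb _ (2 * m)).[c%:C * z] != 0 /\
  rT m S z = (a%:C + b%:C * (cheb _ (2 * m)).[c%:C * z])^-1 /\
  rT m S z = ((a - b)%:C + 2%:R * b%:C * ((cheb _ m).[c%:C * z]) ^+ 2)^-1.
Proof.
move=> /not_node_denT Q0; rewrite -horner_denT -rT_denT //; do 2!split => //.
by rewrite rT_denT // horner_denT cheb_double rmorphB; congr (_^-1); ring.
Qed.

Lemma rT_exact_type : exact_type 0 (2 * m) (rT m S) (not_node m S).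
Proof.
exists 1, denT; split; rewrite ?size_poly1 ?size_denT ?coprime1p // => z /not_node_denT Q0.
by rewrite hornerC mul1r rT_denT.
Qed.

Lemma rT_interval x : - (2 / (S + S^-1)) <= x <= 2 / (S + S^-1) ->
  exists y : R, rT m S x%:C = y%:C /\ (a + b)^-1 <= y <= (a - b)^-1.
Proof.
rewrite two_div_SSV => x_bounds; have c0 := c_gt0.
have cx : c * x \in `[-1, 1].
  have cci : c * c^-1 = 1 by rewrite mulfV ?gt_eqF.
  rewrite in_itv /=; move: x_bounds cci c0; move: (c^-1) => ci /andP[x1 x2] cci c0.
  by apply/andP; split; nra.
have -> : x = cos (acos (c * x)) / c by rewrite acosK // mulrC mulKf ?gt_eqF.
eexists; split; first exact: rT_cos.
have [lo hi] := andP (alpha_beta_cos_bounds ((2 * m)%:R * acos (c * x))).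
have ab0 := alpha_sub_beta_gt0.
by rewrite !lef_pV2 ?posrE ?hi ?lo // (lt_le_trans ab0) // (le_trans lo hi).
Qed.

Lemma rT_equioscillation : exists x : nat -> R,
  (forall k, (k < 2 * m)%N -> x k < x k.+1) /\
  (forall k, (k <= 2 * m)%N ->
     - (2 / (S + S^-1)) <= x k <= 2 / (S + S^-1) /\
     (rT m S (x k)%:C = ((a + b)^-1)%:C \/ rT m S (x k)%:C = ((a - b)^-1)%:C)) /\
  (forall k, (k < 2 * m)%N -> rT m S (x k)%:C <> rT m S (x k.+1)%:C).
Proof.
pose t k : R := pi * k%:R / (2 * m)%:R.
have rT_t k : rT m S (cos (t k + pi) / c)%:C = ((if odd k then a - b else a + b)^-1)%:C.
  rewrite rT_cos (_ : _ * (t k + pi) = (k + 2 * m)%:R * pi); last first.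
    by rewrite /t natrD; field; rewrite pnatr_eq0 -lt0n m_gt0.
  by rewrite cos_natpi -signr_odd oddD oddM /= addbF; case: odd; rewrite ?mulrN1 ?mulr1.
have t_in k : (k <= 2 * m)%N -> t k \in `[0, pi].
  move=> km; rewrite in_itv /= divr_ge0 ?mulr_ge0 ?pi_ge0 //=.
  by rewrite ler_pdivrMr ?ltr0n ?muln_gt0 // ler_pM2l ?pi_gt0 // ler_nat.
exists (fun k => cos (t k + pi) / c); split; [|split].
- move=> k km; have tk := t_in k (ltnW km); have tk1 := t_in k.+1 km.
  rewrite ltr_pM2r ?invr_gt0 ?c_gt0 // !cosDpi ltrN2 ltr_cos // /t.
  by rewrite ltr_pM2r ?invr_gt0 ?ltr0n ?muln_gt0 // ltr_pM2l ?pi_gt0 // ltr_nat.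
- by move=> k km; rewrite rT_t cos_div_c_bounds; split=> //; case: odd; [right | left].
- move=> k _; rewrite !rT_t /=; case: odd => /= /complexI /invr_inj; have := beta_gt0; lra.
Qed.

End Nodes.

Theorem lemma3p1 (R : realType) (m : nat) (S : R) :
  (1 <= m)%N -> 1 < S ->
  let a := alphaT m S in
  let b := betaT m S in
  let c := (S + S^-1) / 2 in
  (* the two closed forms, valid at every non-pole z *)
  (forall z : R[i], not_node m S z ->
     a%:C + b%:C * (cheb _ (2 * m)).[c%:C * z] != 0 /\
     rT m S z = (a%:C + b%:C * (cheb _ (2 * m)).[c%:C * z])^-1 /\
     rT m S z = ((a - b)%:C + 2%:R * b%:C * ((cheb _ m).[c%:C * z]) ^+ 2)^-1) /\
  (* exact type (0, 2m) *)
  exact_type 0 (2 * m) (rT m S) (not_node m S) /\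
  (* on the interval, r is real with values between (a+b)^-1 and (a-b)^-1 *)
  (forall x : R, - (2 / (S + S^-1)) <= x <= 2 / (S + S^-1) ->
     exists y : R, rT m S x%:C = y%:C /\ (a + b)^-1 <= y <= (a - b)^-1) /\
  (* equioscillation at 2m+1 points, alternating between the two values *)
  (exists x : nat -> R,
     (forall k, (k < 2 * m)%N -> x k < x k.+1) /\
     (forall k, (k <= 2 * m)%N ->
        - (2 / (S + S^-1)) <= x k <= 2 / (S + S^-1) /\
        (rT m S (x k)%:C = ((a + b)^-1)%:C \/ rT m S (x k)%:C = ((a - b)^-1)%:C)) /\
     (forall k, (k < 2 * m)%N -> rT m S (x k)%:C <> rT m S (x k.+1)%:C)).
Proof.
move=> m_gt0 S_gt1 a b c.
split; first exact: rT_closed_forms m_gt0 S_gt1.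
split; first exact: rT_exact_type m_gt0 S_gt1.
split; first exact: rT_interval m_gt0 S_gt1.
exact: rT_equioscillation m_gt0 S_gt1.
Qed.
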